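(* Let $F$ be a field with $\mathrm{char}\,F\ne2$ and let $A$ be an involutive $F$-algebra with norm $n(a)=a\bar a$. (1) If $A$ is reversible, then $A$ is von-Neumann finite. (2) If $A$ is von-Neumann finite and $n$ is anisotropic, then $A$ is reversible.
   Context: Algebras are unital, with bilinear not necessarily associative multiplication. $A$ is involutive if there is an anti-automorphism $a\mapsto\bar a$ with $\bar{\bar a}=a$, $a+\bar a\in F1$ and $a\bar a\in F1$ for all $a$; the norm $n(a)=a\bar a\in F$ is a quadratic form, anisotropic if $n(a)\ne0$ for all $a\ne0$. von-Neumann finite: $ab=1\Rightarrow ba=1$; reversible: $ab=0\Rightarrow ba=0$. *)

From HB Require Import structures.
From mathcomp Require Import all_boot all_order all_algebra.
Set Implicit Arguments. Unset Strict Implicit. Unset Printing Implicit Defensive.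
Import GRing.Theory.
Local Open Scope ring_scope.

(* A unital, not necessarily associative F-algebra: an F-vector space V with
   a bilinear multiplication [mul] and a two-sided unit [one]. *)
Definition unital_algebra (F : fieldType) (V : lmodType F)
    (mul : V -> V -> V) (one : V) : Prop :=
  [/\ (forall (r : F) (a b c : V), mul (r *: a + b) c = r *: mul a c + mul b c),
      (forall (r : F) (a b c : V), mul a (r *: b + c) = r *: mul a b + mul a c),
      (forall a, mul one a = a) &
      (forall a, mul a one = a)].

(* [bar] is an involution: an F-linear anti-automorphism with bar (bar a) = a,
   a + bar a in F1 and a bar a in F1 (bijectivity follows from bar o bar = id). *)
Definition involution (F : fieldType) (V : lmodType F)
    (mul : V -> V -> V) (one : V) (bar : V -> V) : Prop :=
  [/\ (forall (r : F) (a b : V), bar (r *: a + b) = r *: bar a + bar b),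
      (forall a b, bar (mul a b) = mul (bar b) (bar a)),
      (forall a, bar (bar a) = a),
      (forall a, exists t : F, a + bar a = t *: one) &
      (forall a, exists t : F, mul a (bar a) = t *: one)].

(* the norm n(a) is the scalar t with a bar a = t 1; anisotropic: n(a) <> 0 for a <> 0 *)
Definition anisotropic_norm (F : fieldType) (V : lmodType F)
    (mul : V -> V -> V) (one : V) (bar : V -> V) : Prop :=
  forall (a : V) (t : F), a != 0 -> mul a (bar a) = t *: one -> t != 0.

Definition vonNeumann_finite (F : fieldType) (V : lmodType F)
    (mul : V -> V -> V) (one : V) : Prop :=
  forall a b : V, mul a b = one -> mul b a = one.

Definition reversible (F : fieldType) (V : lmodType F)
    (mul : V -> V -> V) : Prop :=
  forall a b : V, mul a b = 0 -> mul b a = 0.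

From mathcomp Require Import all_boot all_order all_algebra.
Set Implicit Arguments. Unset Strict Implicit. Unset Printing Implicit Defensive.
Import GRing.Theory.
Local Open Scope ring_scope.

(* Since a + bar a and a bar a are scalars, bar a = t 1 - a, so every a commutes
   with bar a.  Expanding (a + bar b)(bar a + b) = (bar a + b)(a + bar b) then gives
   the polarization identity ab + bar b bar a = bar a bar b + ba.
   (1) Let ab = 1, so bar b bar a = 1.  If n(a) != 0, then a(bar a - n(a) b) = 0,
   and reversing the product gives n(a) 1 = n(a) ba.  If n(b) != 0, the same
   argument for bar b bar a = 1 gives bar a bar b = 1, and polarization gives
   ba = 1.  If n(a) = n(b) = 0, then (a - bar b)(bar a + b) = 0, and reversing
   gives ba = bar a bar b, so polarization reads 2 = 2 ba.
   (2) If ab = 0 with a != 0, then a (b + n(a)^-1 bar a) = 1, so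
   (b + n(a)^-1 bar a) a = 1, i.e. ba = 0. *)

Section UnitalAlgebra.

Variables (F : fieldType) (V : lmodType F) (mul : V -> V -> V) (one : V).
Hypothesis hA : unital_algebra mul one.

Lemma amulDl a b c : mul (a + b) c = mul a c + mul b c.
Proof. by case: hA => linl _ _ _; rewrite -[a]scale1r linl !scale1r. Qed.

Lemma amulDr a b c : mul c (a + b) = mul c a + mul c b.
Proof. by case: hA => _ linr _ _; rewrite -[a]scale1r linr !scale1r. Qed.

Lemma amul0l c : mul 0 c = 0.
Proof. by apply: (addrI (mul 0 c)); rewrite -amulDl !addr0. Qed.

Lemma amul0r c : mul c 0 = 0.
Proof. by apply: (addrI (mul c 0)); rewrite -amulDr !addr0. Qed.

Lemma amulZl r a c : mul (r *: a) c = r *: mul a c.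
Proof. by case: hA => linl _ _ _; rewrite -[r *: a]addr0 linl amul0l addr0. Qed.

Lemma amulZr r a c : mul c (r *: a) = r *: mul c a.
Proof. by case: hA => _ linr _ _; rewrite -[r *: a]addr0 linr amul0r addr0. Qed.

Lemma amulBl a b c : mul (a - b) c = mul a c - mul b c.
Proof. by rewrite amulDl -scaleN1r amulZl scaleN1r. Qed.

Lemma amulBr a b c : mul c (a - b) = mul c a - mul c b.
Proof. by rewrite amulDr -scaleN1r amulZr scaleN1r. Qed.

Section Involution.

Variable bar : V -> V.
Hypothesis hbar : involution mul one bar.

Lemma barD a b : bar (a + b) = bar a + bar b.
Proof. by case: hbar => lin _ _ _ _; rewrite -[a]scale1r lin !scale1r. Qed.

Lemma bar_one : bar one = one.
Proof.
case: hA => _ _ mul1a _; case: hbar => _ barM barK _ _.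
by rewrite -[bar one]mul1a -[one in mul one _]barK -barM mul1a barK.
Qed.

Lemma bar_mul_one a b : mul a b = one -> mul (bar b) (bar a) = one.
Proof. by case: hbar => _ barM _ _ _ hab; rewrite -barM hab bar_one. Qed.

Lemma mul_bar_comm a : mul (bar a) a = mul a (bar a).
Proof.
case: hA => _ _ mul1a mula1; case: hbar => _ _ _ trace _.
have [t ht] := trace a.
have -> : bar a = t *: one - a by rewrite -ht addrC addKr.
by rewrite amulBl amulBr amulZl amulZr mul1a mula1.
Qed.

Lemma mul_polar a b :
  mul a b + mul (bar b) (bar a) = mul (bar a) (bar b) + mul b a.
Proof.
case: hbar => _ _ barK _ _.
have := mul_bar_comm (a + bar b).
rewrite barD barK !amulDl !amulDr mul_bar_comm (mul_bar_comm b) => h.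
apply: (addrI (mul a (bar a))); apply: (addIr (mul b (bar b))).
by rewrite !addrA in h *.
Qed.

Lemma reversible_mul_one_comm a b t :
    reversible mul -> mul a b = one -> mul a (bar a) = t *: one -> t != 0 ->
  mul b a = one.
Proof.
move=> rev hab hna t0.
have h0 : mul a (bar a - t *: b) = 0 by rewrite amulBr amulZr hna hab subrr.
move: (rev _ _ h0); rewrite amulBl amulZl mul_bar_comm hna => /eqP.
by rewrite subr_eq0 => /eqP /(scalerI t0).
Qed.

Lemma reversible_mul_one_isotropic a b :
    reversible mul -> mul a b = one ->
    mul a (bar a) = 0 -> mul b (bar b) = 0 ->
  mul b a = mul (bar a) (bar b).
Proof.
move=> rev hab na0 nb0.
have h0 : mul (a - bar b) (bar a + b) = 0.
  rewrite amulBl !amulDr hab (bar_mul_one hab) na0 mul_bar_comm nb0.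
  by rewrite add0r addr0 subrr.
move: (rev _ _ h0); rewrite !amulDl !amulBr mul_bar_comm na0 nb0.
by rewrite subr0 sub0r => /eqP; rewrite addrC subr_eq0 => /eqP.
Qed.

Lemma reversible_vonNeumann_finite :
  2 \notin [pchar F] -> reversible mul -> vonNeumann_finite mul one.
Proof.
move=> hF rev a b hab.
case: hbar => _ _ barK _ norm.
have polar := mul_polar a b; rewrite hab (bar_mul_one hab) in polar.
have [na hna] := norm a; have [nb hnb] := norm b.
have [na0|na0] := eqVneq na 0; last exact: reversible_mul_one_comm hab hna na0.
have [nb0|nb0] := eqVneq nb 0.
  have two0 : (2%:R : F) != 0 by move: hF; rewrite inE.
  rewrite na0 nb0 scale0r in hna hnb.
  rewrite -(reversible_mul_one_isotropic rev hab hna hnb) in polar.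
  by apply: (scalerI two0); rewrite !scaler_nat !mulr2n polar.
have hnb' : mul (bar b) (bar (bar b)) = nb *: one by rewrite barK mul_bar_comm.
rewrite (reversible_mul_one_comm rev (bar_mul_one hab) hnb' nb0) in polar.
by apply: (addrI one); rewrite polar.
Qed.

Lemma vonNeumann_finite_anisotropic_reversible :
    vonNeumann_finite mul one -> anisotropic_norm mul one bar ->
  reversible mul.
Proof.
move=> vnf aniso a b hab.
have [a0|a0] := eqVneq a 0; first by rewrite a0 amul0r.
case: hbar => _ _ _ _ norm; have [n hn] := norm a.
have n0 := aniso a n a0 hn.
have inv_right : mul a (b + n^-1 *: bar a) = one.
  by rewrite amulDr amulZr hn hab add0r scalerA mulVf // scale1r.
move: (vnf _ _ inv_right).
rewrite amulDl amulZl mul_bar_comm hn scalerA mulVf // scale1r => h.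
by apply: (addIr one); rewrite add0r.
Qed.

End Involution.
End UnitalAlgebra.

Theorem corollary4p10 (F : fieldType) (hF : 2 \notin [pchar F])
    (V : lmodType F) (mul : V -> V -> V) (one : V) (bar : V -> V)
    (hA : unital_algebra mul one) (hbar : involution mul one bar) :
  (reversible mul -> vonNeumann_finite mul one) /\
  (vonNeumann_finite mul one -> anisotropic_norm mul one bar -> reversible mul).
Proof.
split; first exact: (reversible_vonNeumann_finite hA hbar hF).
exact: (vonNeumann_finite_anisotropic_reversible hA hbar).
Qed.
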